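(* Let $M_P$ be the Pappus configuration on $[9]$ with lines $\{1,2,3\},\{1,6,8\},\{7,8,9\},\{2,6,9\},\{2,4,7\},\{3,5,9\},\{3,4,8\},\{1,5,7\},\{4,5,6\}$. Let $i,j\in[9]$ be two distinct points that do not lie on a common line of $M_P$ (equivalently, $\{i,j\}$ is contained in one of $\{1,4,9\},\{2,5,8\},\{3,6,7\}$), and let $k$ be the third element of that triple. Let $F_{ij}$ be the matroid obtained from $M_P$ by making $i$ and $j$ loops (so its remaining lines are three lines concurrent at $k$, and $k$ is its unique point of degree three), and let $F'_{ij}$ be obtained from $M_P$ by making $i,j,k$ loops. Then \[ V_{\mathcal{C}(F_{ij})}=V_{F_{ij}}\cup V_{F'_{ij}}. \]
   Context: A point-line configuration is a simple matroid of rank $\le3$; its lines are the maximal subsets of size $\ge3$ and rank $2$; the degree of a point is the number of lines containing it. For a matroid $K$ on $[d]$ and $S\subseteq[d]$, the matroid obtained by making the points of $S$ loops has circuits $\mathcal{C}(K\setminus S)\cup\{\{s\}:s\in S\}$, where $K\setminus S$ is the restriction of $K$ to $[d]\setminus S$. For a matroid $K$ on $[d]$ of rank $\le3$: a realization is $\gamma\in(\mathbb{C}^3)^d$ such that for all $S\subseteq[d]$, $(\gamma_s)_{s\in S}$ is linearly dependent iff $S$ is dependent in $K$; $V_K$ is the Zariski closure in $\mathbb{C}^{3d}$ of the realizations; $V_{\mathcal{C}(K)}$ is the set of $\gamma\in(\mathbb{C}^3)^d$ with $(\gamma_s)_{s\in S}$ linearly dependent for every dependent $S$ of $K$. *)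

From HB Require Import structures.
From mathcomp Require Import all_boot all_order all_algebra.
From mathcomp Require Import reals complex.
From mathcomp Require Import mpoly.
Set Implicit Arguments. Unset Strict Implicit. Unset Printing Implicit Defensive.
Import Order.TTheory GRing.Theory Num.Theory.
Local Open Scope ring_scope.

(* Points [9] = {1,...,9} are encoded as 'I_9, point p being the ordinal p-1. *)
Definition pt (n : nat) : 'I_9 := inord n.-1.

Definition pappus_lines : {set {set 'I_9}} :=
  [set [set pt 1; pt 2; pt 3]; [set pt 1; pt 6; pt 8]; [set pt 7; pt 8; pt 9];
       [set pt 2; pt 6; pt 9]; [set pt 2; pt 4; pt 7]; [set pt 3; pt 5; pt 9];
       [set pt 3; pt 4; pt 8]; [set pt 1; pt 5; pt 7]; [set pt 4; pt 5; pt 6]].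

Definition pappus_triples : {set {set 'I_9}} :=
  [set [set pt 1; pt 4; pt 9]; [set pt 2; pt 5; pt 8]; [set pt 3; pt 6; pt 7]].

(* A matroid on [9] is given by its predicate of dependent sets. *)
Definition matroid9 := {set 'I_9} -> bool.

(* The Pappus matroid: simple, rank 3, whose rank-2 sets of size >= 3 are
   exactly the subsets of the lines.  A set is dependent iff it has at least
   4 elements or contains a line (a 3-element set is dependent iff it has
   rank 2, i.e. it is one of the lines). *)
Definition M_P : matroid9 :=
  fun T => (3 < #|T|)%N || [exists L in pappus_lines, L \subset T].

(* Making the points of S loops: circuits C(K \ S) together with {s}, s in S.
   A set T is dependent iff it contains such a circuit, i.e. iff T meets S or
   T minus S is dependent in K (circuits of the restriction K \ S are the
   circuits of K avoiding S). *)
Definition make_loops (K : matroid9) (S : {set 'I_9}) : matroid9 :=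
  fun T => (T :&: S != set0) || K (T :\: S).

Section Realizations.
Variable R : realType.
Local Notation C := R[i].

(* gamma in (C^3)^9 is a 9x3 matrix whose s-th row is gamma_s. *)
Definition rows_of (g : 'M[C]_(9,3)) (T : {set 'I_9}) : seq 'rV[C]_3 :=
  [seq row s g | s <- enum T].

Definition lin_dep (g : 'M[C]_(9,3)) (T : {set 'I_9}) : bool :=
  ~~ free (rows_of g T).

Definition realization (K : matroid9) (g : 'M[C]_(9,3)) : Prop :=
  forall T : {set 'I_9}, lin_dep g T = K T.

Definition coords (g : 'M[C]_(9,3)) : 'I_(9 * 3) -> C := fun k => mxvec g 0 k.

(* V_K: Zariski closure in C^{27} of the set of realizations of K. *)
Definition V_K (K : matroid9) (g : 'M[C]_(9,3)) : Prop :=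
  forall p : {mpoly C[9 * 3]},
    (forall h, realization K h -> p.@[coords h] = 0) -> p.@[coords g] = 0.

Definition V_CK (K : matroid9) (g : 'M[C]_(9,3)) : Prop :=
  forall T : {set 'I_9}, K T -> lin_dep g T.

End Realizations.

From HB Require Import structures.
From mathcomp Require Import all_boot all_order all_algebra.
From mathcomp Require Import reals complex.
From mathcomp Require Import mpoly.
From mathcomp Require Import ring.
Set Implicit Arguments. Unset Strict Implicit. Unset Printing Implicit Defensive.
Import Order.TTheory GRing.Theory Num.Theory.
Local Open Scope ring_scope.

(* The inclusion from right to left is formal: the dependencies of F_ij
   (loops, the lines through k) are polynomial conditions, and F'_ij has even
   more loops.  Conversely, let g be in V_C(F_ij); its rows at i and j vanish.
   Relabelling the points, the lines of F_ij are the three lines through k.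
   If the row of k vanishes, the segment from g to a realization of F'_ij stays
   in V_C(F'_ij).  Otherwise the two remaining points of each line through k
   lie in a plane spanned by the row of k and a vector w_l, and one deforms
   this basis together with the coordinates in it to those of a realization
   of F_ij.  In both cases g is the value at 0 of a polynomial curve that stays
   in V_C and is a realization at 1, hence at all but finitely many points
   (where some 3 x 3 minor vanishes); so g lies in the Zariski closure. *)

Section Rows3.
Variable F : fieldType.
Implicit Types (A : 'M[F]_3) (u x y : 'rV[F]_3).

Lemma det3E A : \det A =
  A 0 0 * (A 1 1 * A 2 2 - A 1 2 * A 2 1)
  - A 0 1 * (A 1 0 * A 2 2 - A 1 2 * A 2 0)
  + A 0 2 * (A 1 0 * A 2 1 - A 1 1 * A 2 0).
Proof.
rewrite (expand_det_row _ 0) !big_ord_recl !big_ord0 /cofactor.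
rewrite !(expand_det_row _ 0) !big_ord_recl !big_ord0 /cofactor !det_mx11 !mxE.
pose a (m n : nat) := A (inord m) (inord n).
have aE r c : A r c = a r c by rewrite /a !inord_val.
rewrite !aE /= /bump /= !expr0 !expr1 !exprS !expr0 /=.
rewrite ?(addn0, add0n, addSn, addnS) ?modn_small //.
ring.
Qed.

Lemma free_rows3 A : free [:: row 0 A; row 1 A; row 2 A] = (\det A != 0).
Proof.
rewrite -unitfE -unitmxE -row_free_unit.
have sum_rows (a : 'rV[F]_3) :
    \sum_(r < 3) a 0 r *: [tuple row 0 A; row 1 A; row 2 A]`_r = a *m A.
  rewrite mulmx_sum_row; apply: eq_bigr => -[[|[|[|]]] r3] _ //=;
  by congr (_ *: row _ A); apply: val_inj.
apply/idP/idP => [/(@freeP _ _ 3 [tuple row 0 A; row 1 A; row 2 A]) freeA |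
                  /row_free_inj injA].
- rewrite -kermx_eq0; apply/rowV0P => a /sub_kermxP aA0.
  by apply/rowP => r; rewrite mxE (freeA (a 0)) // sum_rows.
- apply/(@freeP _ _ 3 [tuple row 0 A; row 1 A; row 2 A]) => c c0 r.
  have /injA/rowP/(_ r) : (\row_r c r) *m A = 0 *m A.
    by rewrite mul0mx -sum_rows -[RHS]c0; apply: eq_bigr => s _; rewrite mxE.
  by rewrite !mxE.
Qed.

Lemma size_free_rV3 (X : seq 'rV[F]_3) : free X -> (size X <= 3)%N.
Proof.
by move=> /eqP <-; apply: leq_trans (dimvS (subvf _)) _; rewrite dimvf dim_matrix.
Qed.

Lemma nfree_span2 (X : seq 'rV[F]_3) u x :
  {subset X <= <<[:: u; x]>>%VS} -> (2 < size X)%N -> ~~ free X.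
Proof.
move=> sXux; apply: contraL => /eqP <-; rewrite -leqNgt.
have /dimvS sub : (<<X>> <= <<[:: u; x]>>)%VS by apply/span_subvP.
exact: leq_trans sub (dim_span _).
Qed.

Lemma nfree3_span u x y : u != 0 -> ~~ free [:: u; x; y] ->
  exists w, (x \in <<[:: u; w]>>%VS) && (y \in <<[:: u; w]>>%VS).
Proof.
move=> u0; have /perm_free-> : perm_eq [:: u; x; y] [:: y; x; u].
  by rewrite perm_sym (_ : [:: y; x; u] = rev [:: u; x; y]) // perm_rev.
rewrite free_cons free_cons seq1_free u0 andbT negb_and !negbK.
have in_uw z w : z \in [:: u; w] -> z \in <<[:: u; w]>>%VS by apply: memv_span.
case/orP => [y_xu | x_u].
- exists x; rewrite in_uw ?inE ?eqxx ?orbT //=.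
  by rewrite (@eq_span _ _ [:: u; x] [:: x; u]) // => z; rewrite !inE orbC.
- exists y; rewrite (in_uw y) ?inE ?eqxx ?orbT // andbT.
  have /subvP uy : (<<[:: u]>> <= <<[:: u; y]>>)%VS.
    by apply: sub_span => z; rewrite !inE => ->.
  exact: uy.
Qed.

End Rows3.

Section SmallSets.
Variable X : finType.
Implicit Types (A : {set X}) (w x y z : X).

Lemma card3 x y z : x != y -> y != z -> x != z -> #|[set x; y; z]| = 3.
Proof.
move=> xy yz xz; rewrite setUC cardsU1 cards2 xy !inE negb_or.
by rewrite eq_sym xz eq_sym yz.
Qed.

Lemma perm_enum3 x y z :
  x != y -> y != z -> x != z -> perm_eq (enum [set x; y; z]) [:: x; y; z].
Proof.
move=> xy yz xz; apply: uniq_perm; first exact: enum_uniq.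
  by rewrite /= !inE negb_or xy xz yz.
by move=> w; rewrite mem_enum !inE orbA.
Qed.

Lemma card3P A : #|A| = 3 ->
  exists x y z, [/\ x != y, y != z, x != z & A = [set x; y; z]].
Proof.
move=> A3; have := enum_uniq (mem A); rewrite cardE in A3.
case eA: (enum A) A3 => [|x [|y [|z [|]]]] //= _.
rewrite !inE negb_or => /andP[/andP[xy xz] /andP[yz _]].
exists x, y, z; split => //; apply/setP => w.
by rewrite -mem_enum eA !inE orbA.
Qed.

Lemma subset_pair A w : (#|A| <= 2)%N ->
  exists x y, [/\ A \subset [set x; y], x \in w |: A & y \in w |: A].
Proof.
move=> A2; have nthA i : nth w (enum A) i \in w |: A.
  have [/(mem_nth w) | /(nth_default w) ->] := ltnP i (size (enum A)).
    by rewrite mem_enum => iA; rewrite setU1r.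
  exact: setU11.
exists (nth w (enum A) 0), (nth w (enum A) 1); split=> //.
apply/subsetP => z zA; rewrite !inE; have zA' : z \in enum A by rewrite mem_enum.
rewrite -(nth_index w zA'); have := index_mem z (enum A); rewrite zA' -cardE.
by move/leq_trans/(_ A2); case: (index z (enum A)) => [|[|]] //; rewrite eqxx ?orbT.
Qed.

End SmallSets.

Definition minor3 (S : comNzRingType) (A : 'M[S]_(9,3)) (T : {set 'I_9}) : S :=
  \det (rowsub (fun r : 'I_3 => nth ord0 (enum T) r) A).

Lemma minor3_map (S S' : comNzRingType) (f : {rmorphism S -> S'}) A T :
  minor3 (map_mx f A) T = f (minor3 A T).
Proof. by rewrite /minor3 -det_map_mx map_mxsub. Qed.

Section LinDep.
Variable R : realType.
Local Notation C := R[i].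
Implicit Types (g : 'M[C]_(9,3)) (T U : {set 'I_9}).

Lemma lin_dep_perm g T l :
  perm_eq (enum T) l -> lin_dep g T = ~~ free [seq row x g | x <- l].
Proof. by move=> Tl; rewrite /lin_dep /rows_of (perm_free (perm_map _ Tl)). Qed.

Lemma lin_dep_rowsub g T (f : 'I_3 -> 'I_9) :
  perm_eq (enum T) [:: f 0; f 1; f 2] -> lin_dep g T = (\det (rowsub f g) == 0).
Proof.
by move=> Tf; rewrite (lin_dep_perm _ Tf) -[_ == 0]negbK -free_rows3 !row_rowsub.
Qed.

Lemma lin_dep_minor3 g T : #|T| = 3 -> lin_dep g T = (minor3 g T == 0).
Proof.
rewrite cardE => T3; apply: lin_dep_rowsub.
by case: (enum T) T3 => [|a [|b [|c []]]].
Qed.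

Lemma lin_dep_zero_row g T x : x \in T -> row x g = 0 -> lin_dep g T.
Proof.
move=> xT gx0; apply/negP => /free_not0 free_g.
have : row x g \in rows_of g T by apply: map_f; rewrite mem_enum.
by move/free_g; rewrite gx0 eqxx.
Qed.

Lemma lin_dep_card_gt3 g T : (3 < #|T|)%N -> lin_dep g T.
Proof.
by move=> T3; apply/negP => /size_free_rV3; rewrite size_map -cardE leqNgt T3.
Qed.

Lemma lin_depS g T U : T \subset U -> lin_dep g T -> lin_dep g U.
Proof.
move=> TU; apply: contraLR; rewrite !negbK.
have /perm_free free_UT : perm_eq (rows_of g U) (rows_of g T ++ rows_of g (U :\: T)).
  rewrite -map_cat; apply: perm_map; apply: uniq_perm; rewrite ?enum_uniq //.
    rewrite cat_uniq !enum_uniq andbT /=; apply/hasPn => x.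
    by rewrite !mem_enum inE => /andP[].
  by move=> x; rewrite mem_cat !mem_enum inE; case: (boolP (x \in T)) => // /(subsetP TU).
by rewrite free_UT => /catl_free.
Qed.

Lemma lin_dep1 g x : lin_dep g [set x] = (row x g == 0).
Proof. by rewrite /lin_dep /rows_of enum_set1 /= seq1_free negbK. Qed.

End LinDep.

(* Points are labelled 1..9 as in the statement: the label of x : 'I_9 is x.+1. *)
Definition pappus_lines_nat : seq (seq nat) :=
  [:: [:: 1; 2; 3]; [:: 1; 6; 8]; [:: 7; 8; 9]; [:: 2; 6; 9]; [:: 2; 4; 7];
      [:: 3; 5; 9]; [:: 3; 4; 8]; [:: 1; 5; 7]; [:: 4; 5; 6]].

Definition pappus_triples_nat : seq (seq nat) :=
  [:: [:: 1; 4; 9]; [:: 2; 5; 8]; [:: 3; 6; 7]].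

Definition collinear_in (ls : seq (seq nat)) (a b c : nat) : bool :=
  has (fun l => [&& a \in l, b \in l & c \in l]) ls.

Definition is_label (a : nat) : bool := (0 < a <= 9)%N.

Definition label_set (l : seq nat) : {set 'I_9} := [set x : 'I_9 | x.+1 \in l].

Lemma in_label_set l (x : 'I_9) : (x \in label_set l) = (x.+1 \in l).
Proof. by rewrite inE. Qed.

Lemma pappus_lines_nat_wf :
  all (fun l => [&& size l == 3, uniq l & all is_label l]) pappus_lines_nat.
Proof. by []. Qed.

Lemma labelK (x : 'I_9) : pt x.+1 = x.
Proof. exact: inord_val. Qed.

Lemma ptK a : is_label a -> (pt a).+1 = a.
Proof. by case: a => // a /andP[_ a9]; rewrite /pt inordK. Qed.

Lemma eq_pt (x : 'I_9) a : is_label a -> (x == pt a) = (x.+1 == a).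
Proof. by case: a => // a /andP[_ a9]; rewrite /pt -val_eqE /= inordK. Qed.

Lemma label_set3 a b c : is_label a -> is_label b -> is_label c ->
  [set pt a; pt b; pt c] = label_set [:: a; b; c].
Proof. by move=> a9 b9 c9; apply/setP => x; rewrite in_label_set !inE !eq_pt // orbA. Qed.

Lemma card_label_set l : uniq l -> all is_label l -> #|label_set l| = size l.
Proof.
move=> l_uniq /allP l9; rewrite cardE -(size_map (fun x : 'I_9 => x.+1)).
apply/perm_size/uniq_perm => //.
  by rewrite map_inj_uniq ?enum_uniq // => x y /eqP; rewrite eqSS => /eqP/val_inj.
move=> a; apply/mapP/idP => [[x] | al].
  by rewrite mem_enum (in_label_set l x) => xl ->.
by exists (pt a); rewrite ?mem_enum ?in_label_set ptK // l9.
Qed.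

Lemma mem_pappus_lines L :
  (L \in pappus_lines) = has (fun l => L == label_set l) pappus_lines_nat.
Proof. by rewrite !inE !label_set3 //= orbF !orbA. Qed.

Lemma mem_pappus_triples T :
  (T \in pappus_triples) = has (fun l => T == label_set l) pappus_triples_nat.
Proof. by rewrite !inE !label_set3 //= orbF !orbA. Qed.

Lemma card_pappus_line L : L \in pappus_lines -> #|L| = 3.
Proof.
rewrite mem_pappus_lines => /hasP[l /(allP pappus_lines_nat_wf)].
by case/and3P => /eqP l3 l_uniq l9 /eqP->; rewrite card_label_set.
Qed.

Lemma M_P_triple x y z : x != y -> y != z -> x != z ->
  M_P [set x; y; z] = collinear_in pappus_lines_nat x.+1 y.+1 z.+1.
Proof.
move=> xy yz xz; rewrite /M_P /collinear_in card3 // ltnn orFb.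
have line_eq l : l \in pappus_lines_nat ->
    (label_set l \subset [set x; y; z]) = ([set x; y; z] \subset label_set l).
  case/(allP pappus_lines_nat_wf)/and3P => /eqP l3 l_uniq l9.
  have c3 : #|label_set l| = #|[set x; y; z]| by rewrite card_label_set // card3 // l3.
  apply/idP/idP => [/(subset_cardP c3) | /(subset_cardP (esym c3))] eq_l;
    by apply/subsetP => w; rewrite eq_l.
apply/existsP/hasP => [[L /andP[]] | [l l_line xyz_l]].
- rewrite mem_pappus_lines => /hasP[l l_line /eqP->]; rewrite line_eq //.
  by move=> /subsetP xyz_l; exists l; rewrite // -!in_label_set !xyz_l ?inE ?eqxx ?orbT.
- exists (label_set l); rewrite mem_pappus_lines; apply/andP; split.
    by apply/hasP; exists l.
  rewrite line_eq //; apply/subsetP => w; rewrite in_label_set !inE.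
  by case/and3P: xyz_l => xl yl zl; case/orP => [/orP[]|] /eqP->.
Qed.

Implicit Types (K : matroid9) (S T B L : {set 'I_9}).

Lemma make_loops_disjoint K S T : [disjoint T & S] -> make_loops K S T = K T.
Proof. by move=> TS; rewrite /make_loops (disjoint_setI0 TS) eqxx (setDidPl TS). Qed.

Lemma make_loops_meet K S T x : x \in T -> x \in S -> make_loops K S T.
Proof. by move=> xT xS; apply/orP; left; apply/set0Pn; exists x; rewrite inE xT. Qed.

Lemma disjoint_of_indep K S T : ~~ make_loops K S T -> [disjoint T & S].
Proof.
rewrite -setI_eq0; apply: contraNT => /set0Pn[x].
by rewrite inE => /andP[]; apply: make_loops_meet.
Qed.

Lemma make_loopsS K S S' T :
  S \subset S' -> make_loops K S T -> make_loops K S' T.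
Proof.
move=> SS'; case: (boolP [disjoint T & S']) => [TS' | ]; last first.
  by rewrite -setI_eq0 => TS' _; apply/orP; left.
have TS : [disjoint T & S] by apply: disjointWr TS'.
by rewrite !make_loops_disjoint.
Qed.

Definition indep_extends3 K : Prop :=
  forall T, ~~ K T -> exists2 B : {set 'I_9}, T \subset B & (#|B| == 3) && ~~ K B.

Lemma poly_eq0_of_horner (D : numDomainType) (P : {poly D}) : (forall t, P.[t] = 0) -> P = 0.
Proof.
move=> P0; apply: (@roots_geq_poly_eq0 _ P [seq n%:R | n <- iota 0 (size P)]).
- by apply/allP => _ /mapP[n _ ->]; rewrite /root P0.
- by rewrite map_inj_uniq ?iota_uniq // => m n /eqP; rewrite eqr_nat => /eqP.
- by rewrite size_map size_iota.
Qed.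

Section Varieties.
Variable R : realType.
Local Notation C := R[i].
Implicit Types (g h : 'M[C]_(9,3)).

Lemma realization_V_CK K h : realization K h -> V_CK K h.
Proof. by move=> real_h T; rewrite real_h. Qed.

Lemma V_CK_make_loopsS K S S' g :
  S \subset S' -> V_CK (make_loops K S') g -> V_CK (make_loops K S) g.
Proof. by move=> SS' VC T /(make_loopsS SS'); apply: VC. Qed.

Lemma V_CK_make_loopsP S g :
  V_CK (make_loops M_P S) g <->
  (forall x, x \in S -> row x g = 0) /\
  (forall L, L \in pappus_lines -> [disjoint L & S] -> lin_dep g L).
Proof.
split=> [VC | [g_S g_lines] T].
  split=> [x xS | L L_line LS].
    by apply/eqP; rewrite -lin_dep1; apply: VC; apply: make_loops_meet (set11 x) xS.
  apply: VC; rewrite make_loops_disjoint //; apply/orP; right.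
  by apply/existsP; exists L; rewrite L_line subxx.
case/orP => [/set0Pn[x] | /orP[T_big | /exists_inP[L L_line LT]]].
- by rewrite inE => /andP[xT xS]; apply: lin_dep_zero_row xT (g_S x xS).
- by apply: lin_dep_card_gt3; apply: leq_trans T_big (subset_leq_card (subsetDl T S)).
- apply: lin_depS (subset_trans LT (subsetDl T S)) (g_lines L L_line _).
  by apply: disjointWl LT _; rewrite -setI_eq0 setDE -setIA [~: S :&: S]setIC setICr setI0.
Qed.

Lemma realization_of_indep3 K h : indep_extends3 K -> V_CK K h ->
  (forall B, #|B| = 3 -> ~~ K B -> ~~ lin_dep h B) -> realization K h.
Proof.
move=> extK VC indep3 T; case KT: (K T); first exact: VC.
have [B TB /andP[/eqP B3 KB]] := extK T (negbT KT).
by apply/negbTE; apply: contra (indep3 B B3 KB); apply: lin_depS.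
Qed.

Definition var_mx : 'M[{mpoly C[9 * 3]}]_(9,3) := \matrix_(x, c) 'X_(mxvec_index x c).

Lemma meval_var h x c : (var_mx x c).@[coords h] = h x c.
Proof. by rewrite mxE mevalXU /coords mxvecE. Qed.

Lemma minor3_var h T : (minor3 var_mx T).@[coords h] = minor3 h T.
Proof.
rewrite -minor3_map; congr minor3; apply/matrixP => x c.
by rewrite mxE; apply: meval_var.
Qed.

Lemma V_K_sub_V_CK S g : V_K (make_loops M_P S) g -> V_CK (make_loops M_P S) g.
Proof.
move=> VK; apply/V_CK_make_loopsP; split=> [x xS | L L_line LS].
  apply/rowP => c; rewrite !mxE -(meval_var g x c); apply: VK => h.
  case/realization_V_CK/V_CK_make_loopsP => /(_ x xS)/rowP/(_ c) hx0 _.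
  by rewrite meval_var; move: hx0; rewrite !mxE.
rewrite lin_dep_minor3 ?card_pappus_line // -minor3_var; apply/eqP; apply: VK => h.
case/realization_V_CK/V_CK_make_loopsP => _ /(_ L L_line LS).
by rewrite lin_dep_minor3 ?card_pappus_line // minor3_var => /eqP.
Qed.

Definition mxeval m n (t : C) (H : 'M[{poly C}]_(m,n)) : 'M[C]_(m,n) :=
  map_mx (horner_eval t) H.

Lemma mxeval0 m n t : mxeval t (0 : 'M[{poly C}]_(m,n)) = 0.
Proof. by apply/matrixP => a b; rewrite !mxE rmorph0. Qed.

Lemma mxevalD m n t (H1 H2 : 'M[{poly C}]_(m,n)) :
  mxeval t (H1 + H2) = mxeval t H1 + mxeval t H2.
Proof. exact: map_mxD. Qed.

Lemma mxevalZ m n t p (H : 'M[{poly C}]_(m,n)) : mxeval t (p *: H) = p.[t] *: mxeval t H.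
Proof. exact: map_mxZ. Qed.

Lemma mxeval_sum t (I : Type) (r : seq I) (P : pred I) (F : I -> 'rV[{poly C}]_3) :
  mxeval t (\sum_(i <- r | P i) F i) = \sum_(i <- r | P i) mxeval t (F i).
Proof. by apply: big_morph; [exact: mxevalD | exact: mxeval0]. Qed.

Lemma mxeval_row m n t (H : 'M[{poly C}]_(m,n)) x : row x (mxeval t H) = mxeval t (row x H).
Proof. by rewrite /mxeval map_row. Qed.

Definition seg_poly (a b : C) : {poly C} := (1 - 'X) * a%:P + 'X * b%:P.

Definition seg_mx m n (A B : 'M[C]_(m,n)) : 'M[{poly C}]_(m,n) :=
  (1 - 'X) *: map_mx polyC A + 'X *: map_mx polyC B.

Lemma horner_seg a b t : (seg_poly a b).[t] = (1 - t) * a + t * b.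
Proof. by rewrite /seg_poly !hornerE. Qed.

Lemma mxeval_seg m n (A B : 'M[C]_(m,n)) t : mxeval t (seg_mx A B) = (1 - t) *: A + t *: B.
Proof.
have polyCK (M : 'M[C]_(m,n)) : mxeval t (map_mx polyC M) = M.
  by rewrite /mxeval -map_mx_comp map_mx_id // => a /=; rewrite horner_evalE hornerC.
by rewrite mxevalD !mxevalZ !polyCK !hornerE.
Qed.

Lemma horner_meval n (p : {mpoly C[n]}) (v : 'I_n -> {poly C}) t :
  ((map_mpoly polyC p).@[v]).[t] = p.@[fun i => (v i).[t]].
Proof.
rewrite -horner_evalE !mevalE (perm_big _ (msupp_map_mpoly p (@polyC_inj _))).
rewrite rmorph_sum; apply: eq_bigr => m _.
rewrite mcoeff_map_mpoly rmorphM rmorph_prod /= horner_evalE hornerC.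
by congr (_ * _); apply: eq_bigr => i _; rewrite rmorphXn.
Qed.

Lemma coords_mxeval H t k : coords (mxeval t H) k = (mxvec H 0 k).[t].
Proof. by rewrite /coords /mxeval -map_mxvec mxE. Qed.

(* A polynomial vanishing on all realizations vanishes along the curve outside
   the finitely many roots of the product of the 3 x 3 minors of independent
   triples, which is nonzero since it does not vanish at [t = 1]. *)
Lemma V_K_of_curve K (H : 'M[{poly C}]_(9,3)) :
  indep_extends3 K -> (forall t, V_CK K (mxeval t H)) ->
  (forall B, #|B| = 3 -> ~~ K B -> ~~ lin_dep (mxeval 1 H) B) ->
  V_K K (mxeval 0 H).
Proof.
move=> extK VC indep1 p p_real.
pose Q := \prod_(B : {set 'I_9} | (#|B| == 3) && ~~ K B) minor3 H B.
have QE t : Q.[t] = \prod_(B : {set 'I_9} | (#|B| == 3) && ~~ K B) minor3 (mxeval t H) B.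
  by rewrite -horner_evalE rmorph_prod; apply: eq_bigr => B _; rewrite minor3_map.
have real_t t : Q.[t] != 0 -> realization K (mxeval t H).
  rewrite QE => /prodf_neq0 Qt; apply: realization_of_indep3 => // B B3 KB.
  by rewrite lin_dep_minor3 // Qt ?B3 ?eqxx.
have Q1 : Q.[1] != 0.
  by rewrite QE; apply/prodf_neq0 => B /andP[/eqP B3 KB]; rewrite -lin_dep_minor3 ?indep1.
pose P := (map_mpoly polyC p).@[fun k => mxvec H 0 k].
have PE t : P.[t] = p.@[coords (mxeval t H)].
  by rewrite horner_meval; apply: meval_eq => k; rewrite coords_mxeval.
have /eqP : P * Q = 0.
  apply: poly_eq0_of_horner => t; rewrite hornerM.
  have [-> | /real_t/p_real] := eqVneq Q.[t] 0; first by rewrite mulr0.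
  by rewrite -PE => ->; rewrite mul0r.
rewrite mulf_eq0 => /orP[/eqP P0 | /eqP Q0]; first by rewrite -PE P0 horner0.
by move: Q1; rewrite Q0 horner0 eqxx.
Qed.

End Varieties.

(* After relabelling the points by roles 0..8 (roles 0, 1, 2 being i, j, k),
   the lines of F_ij are the three lines {2, 3 + 2l, 4 + 2l}, l < 3. *)
Definition std_line (l : nat) : seq nat := [:: 2; 3 + 2 * l; 4 + 2 * l].

Definition std_collinear : nat -> nat -> nat -> bool :=
  collinear_in [seq std_line l | l <- iota 0 3].

Definition all_distinct3 (rs : seq nat) (P : nat -> nat -> nat -> bool) : bool :=
  all (fun a => all (fun b => all (fun c =>
    [&& a != b, b != c & a != c] ==> P a b c) rs) rs) rs.

Lemma all_distinct3P rs P a b c : all_distinct3 rs P ->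
  a \in rs -> b \in rs -> c \in rs -> a != b -> b != c -> a != c -> P a b c.
Proof.
move=> /allP rsP ars brs crs ab bc ac.
by move: (rsP a ars) => /allP/(_ b brs)/allP/(_ c crs); rewrite ab bc ac.
Qed.

(* A frame lists the labels of the points in the order of their roles. *)
Definition std_frame (s : seq nat) : bool :=
  perm_eq s (iota 1 9) &&
  all_distinct3 (iota 2 7) (fun a b c =>
    collinear_in pappus_lines_nat (nth 0 s a) (nth 0 s b) (nth 0 s c) ==
    std_collinear a b c).

Definition pappus_frame (a b c : nat) : seq nat :=
  [:: a; b; c] ++ flatten [seq rem c l | l <- pappus_lines_nat &
                                         [&& c \in l, a \notin l & b \notin l]].

Lemma pappus_frame_std :
  all (fun t => all_distinct3 t (fun a b c => std_frame (pappus_frame a b c)))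
      pappus_triples_nat.
Proof. by vm_compute. Qed.

Lemma std_extends :
  all (fun m => let rs := iota m (9 - m) in
    all (fun a => all (fun b =>
      has (fun c => has (fun d => has (fun e =>
        [&& [&& c != d, d != e & c != e], ~~ std_collinear c d e,
            a \in [:: c; d; e] & b \in [:: c; d; e]]) rs) rs) rs) rs) rs) [:: 2; 3]%N.
Proof. by vm_compute. Qed.

Lemma std_line_roles l : (l < 3)%N ->
  [/\ 2 \in iota 2 7, 3 + 2 * l \in iota 2 7 & 4 + 2 * l \in iota 2 7].
Proof. by case: l => [|[|[|]]]. Qed.

Lemma role_lt9 r : r \in iota 2 7 -> (r < 9)%N.
Proof. by rewrite mem_iota => /andP[]. Qed.

Definition line_of (r : nat) : nat := (r - 3)./2.

Lemma line_ofP r : (3 <= r < 9)%N -> (line_of r < 3)%N /\ r \in std_line (line_of r).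
Proof. by case/andP; case: r => [|[|[|[|[|[|[|[|[|]]]]]]]]]. Qed.

Lemma line_of_std l r : (l < 3)%N -> r \in std_line l -> (3 <= r)%N -> line_of r = l.
Proof.
move=> l3 rl r3; case: l l3 rl => [|[|[|]]] // _;
  by rewrite !inE => /or3P[] /eqP rE; rewrite rE in r3 *.
Qed.

(* Integer coordinates of a realization of F_ij in standard form: role 2 is
   e3 and the points on line l are the combinations std_lam * e3 + std_mu * d_l.
   Any values making the determinants below nonzero would do. *)
Definition e3_int : seq int := [:: 0; 0; 1].
Definition std_dir (l : nat) : seq int := nth [:: 1; 1; 0] [:: [:: 1; 0; 0]; [:: 0; 1; 0]] l.
Definition std_lam (r : nat) : int := nth 0 [:: -1; 2; 3; -2; 1; -3] (r - 3).
Definition std_mu (r : nat) : int := nth 0 [:: 2; 1; 1; 1; 3; 3] (r - 3).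

Definition lin_comb (a b : int) (u v : seq int) : seq int :=
  [:: a * u`_0 + b * v`_0; a * u`_1 + b * v`_1; a * u`_2 + b * v`_2].

Definition std_coords (r : nat) : seq int :=
  if r == 2 then e3_int else lin_comb (std_lam r) (std_mu r) e3_int (std_dir (line_of r)).

Definition det3z (u v w : seq int) : int :=
  u`_0 * (v`_1 * w`_2 - v`_2 * w`_1) - u`_1 * (v`_0 * w`_2 - v`_2 * w`_0)
  + u`_2 * (v`_0 * w`_1 - v`_1 * w`_0).

Lemma std_coords_indep :
  all_distinct3 (iota 2 7) (fun a b c =>
    ~~ std_collinear a b c ==> (det3z (std_coords a) (std_coords b) (std_coords c) != 0)).
Proof. by vm_compute. Qed.

Section IntRows.
Variable R : realType.
Local Notation C := R[i].

Definition int_row (u : seq int) : 'rV[C]_3 := \row_j (u`_j)%:~R.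

Lemma int_row_comb a b u v :
  int_row (lin_comb a b u v) = a%:~R *: int_row u + b%:~R *: int_row v.
Proof. by apply/rowP => -[[|[|[|j]]] j3] //; rewrite /int_row !mxE /= intrD !intrM. Qed.

Lemma det_int_rows (A : 'M[C]_3) u v w :
  row 0 A = int_row u -> row 1 A = int_row v -> row 2 A = int_row w ->
  \det A = (det3z u v w)%:~R.
Proof.
move=> Au Av Aw; have Arow r c : A r c = row r A 0 c by rewrite mxE.
rewrite det3E !Arow Au Av Aw /int_row !mxE /det3z /= !modn_small //.
by rewrite !(intrD, intrN, intrM).
Qed.

End IntRows.

Section Frame.
Variable s : seq nat.
Hypothesis s_std : std_frame s.

Definition point (r : nat) : 'I_9 := pt (nth 0 s r).
Definition role (x : 'I_9) : nat := index x.+1 s.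
Definition loops (m : nat) : {set 'I_9} := [set x | (role x < m)%N].

Lemma mem_frame a : (a \in s) = is_label a.
Proof. by rewrite (perm_mem (andP s_std).1) mem_iota. Qed.

Lemma frame_uniq : uniq s.
Proof. by rewrite (perm_uniq (andP s_std).1) iota_uniq. Qed.

Lemma size_frame : size s = 9.
Proof. by rewrite (perm_size (andP s_std).1) size_iota. Qed.

Lemma label_point r : (r < 9)%N -> (point r).+1 = nth 0 s r.
Proof. by move=> r9; rewrite ptK // -mem_frame mem_nth ?size_frame. Qed.

Lemma pointK x : point (role x) = x.
Proof. by rewrite /point nth_index ?labelK // mem_frame /is_label ltn_ord. Qed.

Lemma roleK r : (r < 9)%N -> role (point r) = r.
Proof. by move=> r9; rewrite /role label_point // index_uniq ?frame_uniq ?size_frame. Qed.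

Lemma role_lt x : (role x < 9)%N.
Proof. by rewrite /role -[X in (_ < X)%N]size_frame index_mem mem_frame /is_label ltn_ord. Qed.

Lemma role_inj : injective role.
Proof. exact: can_inj pointK. Qed.

Lemma eq_point x r : (r < 9)%N -> (x == point r) = (role x == r).
Proof. by move=> r9; apply/eqP/eqP => [-> | <-]; rewrite ?roleK ?pointK. Qed.

Lemma mem_point3 x a b c : (a < 9)%N -> (b < 9)%N -> (c < 9)%N ->
  (x \in [set point a; point b; point c]) = (role x \in [:: a; b; c]).
Proof. by move=> a9 b9 c9; rewrite !inE !eq_point // orbA. Qed.

Lemma in_loops m x : (x \in loops m) = (role x < m)%N.
Proof. by rewrite inE. Qed.

Lemma loopsS m n : (m <= n)%N -> loops m \subset loops n.
Proof. by move=> mn; apply/subsetP => x; rewrite !in_loops => /leq_trans; apply. Qed.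

Lemma loops2E : loops 2 = [set point 0; point 1].
Proof. by apply/setP => x; rewrite in_loops !inE !eq_point //; case: (role x) => [|[|]]. Qed.

Lemma loops3E : loops 3 = [set point 0; point 1; point 2].
Proof. by apply/setP => x; rewrite in_loops !inE !eq_point //; case: (role x) => [|[|[|]]]. Qed.

Lemma M_P_points a b c : a \in iota 2 7 -> b \in iota 2 7 -> c \in iota 2 7 ->
  a != b -> b != c -> a != c ->
  M_P [set point a; point b; point c] = std_collinear a b c.
Proof.
move=> a2 b2 c2 ab bc ac.
rewrite M_P_triple ?eq_point ?roleK ?role_lt9 // !label_point ?role_lt9 //.
by apply/eqP; apply: (all_distinct3P (andP s_std).2).
Qed.

Definition std_line_set (l : nat) : {set 'I_9} :=
  [set point 2; point (3 + 2 * l); point (4 + 2 * l)].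

Lemma std_line_set_perm l : (l < 3)%N ->
  perm_eq (enum (std_line_set l)) [:: point 2; point (3 + 2 * l); point (4 + 2 * l)].
Proof.
move=> l3; have [r2 r3 r4] := std_line_roles l3.
apply: perm_enum3; rewrite eq_point ?roleK ?role_lt9 //;
  by rewrite neq_ltn ?ltn_add2r ?ltnS ?leq_addr.
Qed.

Lemma M_P_std_line l : (l < 3)%N -> M_P (std_line_set l).
Proof.
move=> l3; have [r2 r3 r4] := std_line_roles l3.
rewrite /std_line_set M_P_points //; last by rewrite neq_ltn ltn_add2r.
apply/hasP; exists (std_line l); first by apply: map_f; rewrite mem_iota.
by rewrite !inE !eqxx ?orbT.
Qed.

Lemma std_line_set_disjoint l : (l < 3)%N -> [disjoint std_line_set l & loops 2].
Proof.
move=> l3; have [r2 r3 r4] := std_line_roles l3.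
rewrite disjoints_subset; apply/subsetP => x.
rewrite /std_line_set mem_point3 ?role_lt9 // !inE -leqNgt.
by case/or3P => /eqP->.
Qed.

Lemma pappus_line_std L : L \in pappus_lines -> [disjoint L & loops 2] ->
  exists2 l, (l < 3)%N & L = std_line_set l.
Proof.
move=> L_line L2; have [x [y [z [xy yz xz L_xyz]]]] := card3P (card_pappus_line L_line).
have role2 w : w \in L -> role w \in iota 2 7.
  by move=> wL; rewrite mem_iota role_lt andbT leqNgt -in_loops (disjointFr L2 wL).
have [xL yL zL] : [/\ x \in L, y \in L & z \in L] by rewrite L_xyz !inE !eqxx ?orbT.
have : M_P L by apply/orP; right; apply/exists_inP; exists L.
rewrite {1}L_xyz -{1}[x]pointK -{1}[y]pointK -{1}[z]pointK.
rewrite M_P_points ?role2 ?(inj_eq role_inj) //.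
case/hasP => _ /mapP[l + ->] /and3P[xl yl zl]; rewrite mem_iota => /andP[_ l3].
exists l => //; have [r2 r3 r4] := std_line_roles l3.
apply/eqP; rewrite L_xyz eqEcard cardE (perm_size (std_line_set_perm l3)) card3 //.
rewrite leqnn andbT; apply/subsetP => w /[!inE] /orP[/orP[]|] /eqP->;
  [move: xl | move: yl | move: zl]; by rewrite !inE !eq_point ?role_lt9 // orbA.
Qed.

Lemma V_CK_loops3P (R : realType) (g : 'M[R[i]]_(9,3)) :
  V_CK (make_loops M_P (loops 3)) g <-> forall x, x \in loops 3 -> row x g = 0.
Proof.
rewrite V_CK_make_loopsP; split=> [[] // | g3]; split=> // L L_line L3.
have [l l3 Ll] := pappus_line_std L_line (disjointWr (loopsS (leqnSn 2)) L3).
have k3 : point 2 \in loops 3 by rewrite in_loops roleK.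
by move: (disjointFl L3 k3); rewrite Ll !inE eqxx.
Qed.

Lemma indep_extends3_loops m : m \in [:: 2; 3]%N ->
  indep_extends3 (make_loops M_P (loops m)).
Proof.
move=> m23 T nT; have /andP[m2 m3] : (2 <= m <= 3)%N.
  by move: m23; rewrite !inE => /orP[]/eqP->.
have rsE r : (r \in iota m (9 - m)) = (m <= r < 9)%N.
  by rewrite mem_iota subnKC // (leq_trans m3).
have Tm := disjoint_of_indep nT.
move: (nT); rewrite make_loops_disjoint // /M_P negb_or -leqNgt => /andP[T3 _].
have [T_eq3 | T_neq3] := eqVneq #|T| 3; first by exists T; rewrite ?T_eq3 ?eqxx.
have T2 : (#|T| <= 2)%N by rewrite -ltnS ltn_neqAle T_neq3 T3.
have [x [y [Txy xT yT]]] := subset_pair (point m) T2.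
have in_rs w : w \in point m |: T -> role w \in iota m (9 - m).
  rewrite rsE role_lt andbT; case/setU1P => [-> | wT].
    by rewrite roleK // (leq_ltn_trans m3).
  by rewrite leqNgt -in_loops (disjointFr Tm wT).
have := allP std_extends m m23 => /= /allP/(_ _ (in_rs x xT))/allP/(_ _ (in_rs y yT)).
case/hasP => c c_rs /hasP[d d_rs /hasP[e e_rs /and4P[/and3P[cd de ce] ncol xcde ycde]]].
rewrite !rsE in c_rs d_rs e_rs.
case/andP: c_rs => mc c9; case/andP: d_rs => md d9; case/andP: e_rs => me e9.
have r2 r : (m <= r)%N -> (r < 9)%N -> r \in iota 2 7.
  by move=> mr r9; rewrite mem_iota (leq_trans m2 mr).
exists [set point c; point d; point e].
  by apply: subset_trans Txy _; apply/subsetP => w /set2P[]->; rewrite mem_point3.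
have nB : ~~ M_P [set point c; point d; point e] by rewrite M_P_points ?r2.
rewrite card3 ?eq_point ?roleK // eqxx andTb make_loops_disjoint //.
rewrite disjoints_subset; apply/subsetP => w; rewrite mem_point3 // !inE -leqNgt.
by case/or3P => /eqP->.
Qed.

Section Deformations.
Variable R : realType.
Local Notation C := R[i].

Definition std_config (m : nat) : 'M[C]_(9,3) :=
  \matrix_(x < 9) (if (m <= role x)%N then int_row R (std_coords (role x)) else 0).

Lemma row_std_config m x :
  row x (std_config m) = if (m <= role x)%N then int_row R (std_coords (role x)) else 0.
Proof. exact: rowK. Qed.

Lemma std_config_indep m B : (2 <= m)%N -> #|B| = 3 ->
  ~~ make_loops M_P (loops m) B -> ~~ lin_dep (std_config m) B.
Proof.
move=> m2 B3 nB; have Bm := disjoint_of_indep nB.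
rewrite make_loops_disjoint // in nB.
have [x [y [z [xy yz xz B_xyz]]]] := card3P B3.
have role_m w : w \in B -> (m <= role w)%N.
  by move=> wB; rewrite leqNgt -in_loops (disjointFr Bm wB).
have role_rs w : w \in B -> role w \in iota 2 7.
  by move=> wB; rewrite mem_iota role_lt (leq_trans m2 (role_m w wB)).
have [xB yB zB] : [/\ x \in B, y \in B & z \in B] by rewrite B_xyz !inE !eqxx ?orbT.
have rows w : w \in B -> row w (std_config m) = int_row R (std_coords (role w)).
  by move=> wB; rewrite row_std_config role_m.
rewrite B_xyz (@lin_dep_rowsub _ _ _ (fun r => nth x [:: x; y; z] r) (perm_enum3 xy yz xz)).
rewrite (det_int_rows (u := std_coords (role x)) (v := std_coords (role y))
                      (w := std_coords (role z))) ?row_rowsub ?rows // intr_eq0.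
have := all_distinct3P std_coords_indep (role_rs x xB) (role_rs y yB) (role_rs z zB).
rewrite !(inj_eq role_inj) => /(_ xy yz xz) /implyP; apply.
move: nB; rewrite B_xyz -{1}[x]pointK -{1}[y]pointK -{1}[z]pointK.
by rewrite M_P_points ?role_rs // ?(inj_eq role_inj).
Qed.

(* When the row of k vanishes too, move g linearly to a realization of F'_ij:
   the lines of F_ij all pass through k, so no condition has to be preserved. *)
Lemma V_K_loops3 (g : 'M[C]_(9,3)) : (forall x, x \in loops 3 -> row x g = 0) ->
  V_K (make_loops M_P (loops 3)) g.
Proof.
move=> g3; have HE := mxeval_seg g (std_config 3).
have <- : mxeval 0 (seg_mx g (std_config 3)) = g by rewrite HE subr0 scale1r scale0r addr0.
apply: V_K_of_curve; first exact: indep_extends3_loops.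
  move=> t; apply/V_CK_loops3P => x x3.
  by rewrite HE linearD !linearZ /= g3 // row_std_config leqNgt -in_loops x3 !scaler0 addr0.
by move=> B B3 nB; rewrite HE subrr scale0r add0r scale1r std_config_indep.
Qed.

Section FrameCurve.
Variables (g : 'M[C]_(9,3)) (w : nat -> 'rV[C]_3).
Local Notation u := (row (point 2) g).
Hypothesis g_loops : forall x, x \in loops 2 -> row x g = 0.
Hypothesis g_span : forall l r, (l < 3)%N -> r \in std_line l ->
  row (point r) g \in <<[:: u; w l]>>%VS.

Definition frame_basis (r : nat) : 2.-tuple 'rV[C]_3 := [tuple u; w (line_of r)].

Definition std_basis (r : nat) : 2.-tuple 'rV[C]_3 :=
  [tuple int_row R e3_int; int_row R (std_dir (line_of r))].

Definition std_coef (r : nat) (i : 'I_2) : C := ([:: std_lam r; std_mu r]`_i)%:~R.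

(* Each point of a line through k is written in the basis (row of k, w l) of
   the plane of that line; the curve moves both the basis and the coordinates. *)
Definition curve_row (r : nat) : 'rV[{poly C}]_3 :=
  if r == 2 then seg_mx u (int_row R e3_int)
  else if (3 <= r)%N then
    \sum_(i < 2) seg_poly (coord (frame_basis r) i (row (point r) g)) (std_coef r i) *:
                   seg_mx (frame_basis r)`_i (std_basis r)`_i
  else 0.

Definition frame_curve : 'M[{poly C}]_(9,3) := \matrix_(x < 9) curve_row (role x).

Lemma row_frame_curve t x : row x (mxeval t frame_curve) = mxeval t (curve_row (role x)).
Proof. by rewrite mxeval_row rowK. Qed.

Lemma curve_row_eval t r : (3 <= r)%N ->
  mxeval t (curve_row r) =
    \sum_(i < 2) ((1 - t) * coord (frame_basis r) i (row (point r) g) + t * std_coef r i) *: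
                 ((1 - t) *: (frame_basis r)`_i + t *: (std_basis r)`_i).
Proof.
move=> r3; rewrite /curve_row r3 ifN; last by apply: contraTneq r3 => ->.
by rewrite mxeval_sum; apply: eq_bigr => i _; rewrite mxevalZ mxeval_seg horner_seg.
Qed.

Lemma frame_curve0 : mxeval 0 frame_curve = g.
Proof.
apply/row_matrixP => x; rewrite row_frame_curve -[in RHS](pointK x).
have [r2 | r_ne2] := eqVneq (role x) 2.
  by rewrite /curve_row r2 eqxx mxeval_seg subr0 scale1r scale0r addr0.
have [r_lt3 | r3] := ltnP (role x) 3.
  move: r_lt3; rewrite ltnS leq_eqVlt (negbTE r_ne2) /= => r_lt2.
  by rewrite /curve_row (negbTE r_ne2) leqNgt ltnW // mxeval0 pointK g_loops ?in_loops.
have [l3 rl] := @line_ofP (role x) (introT andP (conj r3 (role_lt x))).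
rewrite curve_row_eval // [RHS](coord_span (g_span l3 rl)).
by apply: eq_bigr => i _; rewrite subr0 mul1r mul0r addr0 scale1r scale0r addr0.
Qed.

Lemma frame_curve1 : mxeval 1 frame_curve = std_config 2.
Proof.
apply/row_matrixP => x; rewrite row_frame_curve row_std_config.
have [r2 | r_ne2] := eqVneq (role x) 2.
  by rewrite /curve_row r2 eqxx mxeval_seg subrr scale0r add0r scale1r.
have [r_lt3 | r3] := ltnP (role x) 3.
  move: r_lt3; rewrite ltnS leq_eqVlt (negbTE r_ne2) /= => r_lt2.
  by rewrite /curve_row (negbTE r_ne2) !ifN ?mxeval0 // -ltnNge // ltnW.
rewrite curve_row_eval // ltnW // /std_coords (negbTE r_ne2) int_row_comb.
by rewrite !big_ord_recl big_ord0 !subrr !mul0r !add0r !mul1r !scale0r !add0r !scale1r addr0.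
Qed.

Lemma V_CK_frame_curve t : V_CK (make_loops M_P (loops 2)) (mxeval t frame_curve).
Proof.
apply/V_CK_make_loopsP; split=> [x | L L_line L2].
  rewrite in_loops row_frame_curve => r_lt2.
  by rewrite /curve_row; case: (role x) r_lt2 => [|[|]] // _; apply: mxeval0.
have [l l3 ->] := pappus_line_std L_line L2.
pose Kt := (1 - t) *: u + t *: int_row R e3_int.
pose Wt := (1 - t) *: w l + t *: int_row R (std_dir l).
have Kt_in : Kt \in <<[:: Kt; Wt]>>%VS by apply: memv_span; rewrite !inE eqxx.
have Wt_in : Wt \in <<[:: Kt; Wt]>>%VS by apply: memv_span; rewrite !inE eqxx orbT.
have row_span r : r \in iota 2 7 -> r \in std_line l ->
    row (point r) (mxeval t frame_curve) \in <<[:: Kt; Wt]>>%VS.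
  move=> r_rs rl; rewrite row_frame_curve roleK ?role_lt9 //.
  have [-> | r_ne2] := eqVneq r 2; first by rewrite /curve_row eqxx mxeval_seg; exact: Kt_in.
  have r_ge3 : (3 <= r)%N.
    by rewrite ltn_neqAle eq_sym r_ne2; move: r_rs; rewrite mem_iota => /andP[].
  rewrite curve_row_eval // /frame_basis /std_basis (line_of_std l3 rl r_ge3).
  by apply: memv_suml => -[[|[|]] i2] _ //=; apply: memvZ.
have [r2 r3 r4] := std_line_roles l3.
rewrite (lin_dep_perm _ (std_line_set_perm l3)).
apply: (nfree_span2 (u := Kt) (x := Wt)) => // v /mapP[y + ->].
by rewrite !inE => /or3P[]/eqP->; apply: row_span; rewrite // !inE eqxx ?orbT.
Qed.

Lemma V_K_frame : V_K (make_loops M_P (loops 2)) g.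
Proof.
rewrite -frame_curve0; apply: V_K_of_curve; first exact: indep_extends3_loops.
  exact: V_CK_frame_curve.
by move=> B B3 nB; rewrite frame_curve1 std_config_indep.
Qed.

End FrameCurve.

Lemma V_K_loops3_of_V_CK (g : 'M[C]_(9,3)) : V_CK (make_loops M_P (loops 2)) g ->
  row (point 2) g = 0 -> V_K (make_loops M_P (loops 3)) g.
Proof.
case/V_CK_make_loopsP => g2 _ k0; apply: V_K_loops3 => x.
rewrite in_loops ltnS leq_eqVlt => /orP[/eqP x2 | x2]; last by rewrite g2 ?in_loops.
by rewrite -(pointK x) x2.
Qed.

Lemma V_K_loops2_of_V_CK (g : 'M[C]_(9,3)) : V_CK (make_loops M_P (loops 2)) g ->
  row (point 2) g != 0 -> V_K (make_loops M_P (loops 2)) g.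
Proof.
move=> VC k_nz; have /fin_all_exists [w w_span] : forall l : 'I_3, exists w,
    (row (point (3 + 2 * l)) g \in <<[:: row (point 2) g; w]>>%VS) &&
    (row (point (4 + 2 * l)) g \in <<[:: row (point 2) g; w]>>%VS).
  move=> l; apply: (nfree3_span k_nz).
  rewrite -(lin_dep_perm _ (std_line_set_perm (ltn_ord l))); apply: VC.
  by rewrite make_loops_disjoint ?M_P_std_line ?std_line_set_disjoint.
apply: (@V_K_frame g (fun l => w (inord l))) => [|l r l3].
  by case/V_CK_make_loopsP: VC.
rewrite !inE => /or3P[]/eqP->; first by apply: memv_span; rewrite !inE eqxx.
  by case/andP: (w_span (inord l)); rewrite inordK.
by case/andP: (w_span (inord l)); rewrite inordK.
Qed.

End Deformations.

End Frame.

Lemma frame_exists (i j k : 'I_9) : i != j -> k != i -> k != j ->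
  [set i; j; k] \in pappus_triples ->
  exists2 s, std_frame s & [/\ point s 0 = i, point s 1 = j & point s 2 = k].
Proof.
move=> ij ki kj; rewrite mem_pappus_triples => /hasP[t t_tri /eqP ijk_t].
have [it jt kt] : [/\ i.+1 \in t, j.+1 \in t & k.+1 \in t].
  by rewrite -!in_label_set -ijk_t !inE !eqxx ?orbT.
exists (pappus_frame i.+1 j.+1 k.+1); last by rewrite /point /= !labelK.
apply: (all_distinct3P (allP pappus_frame_std t t_tri)) => //;
  by rewrite eqSS val_eqE // eq_sym.
Qed.

Theorem mainTheorem14 (R : realType) (i j k : 'I_9) :
  i != j ->
  ~~ [exists L in pappus_lines, (i \in L) && (j \in L)] ->
  k != i -> k != j -> [set i; j; k] \in pappus_triples ->
  forall g : 'M[complex R]_(9,3),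
    V_CK (make_loops M_P [set i; j]) g <->
    (V_K (make_loops M_P [set i; j]) g \/ V_K (make_loops M_P [set i; j; k]) g).
Proof.
move=> ij _ ki kj ijk g.
have [s s_std [<- <- <-]] := frame_exists ij ki kj ijk.
rewrite -(loops3E s_std) -(loops2E s_std).
split=> [VC | [VK | VK]]; last 2 first.
- exact: V_K_sub_V_CK.
- exact: V_CK_make_loopsS (loopsS _ (leqnSn 2)) (V_K_sub_V_CK VK).
have [k0 | k_nz] := eqVneq (row (point s 2) g) 0.
  by right; apply: V_K_loops3_of_V_CK.
by left; apply: V_K_loops2_of_V_CK.
Qed.
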